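(* Let $r$ be an $\mathfrak s$-matrix on a pre-Lie algebra $(\mathfrak g,\cdot_{\mathfrak g})$. Then for every $k\ge0$ and $\varphi\in\wedge^k\mathfrak g\otimes\mathfrak g=C^{k+1}_{\mathfrak s}(\mathfrak g)$ we have $\Psi(\delta_{\mathfrak s}\varphi)=\delta_{\mathrm{RB}}(\Psi\varphi)$. Consequently $\Psi$ is an isomorphism of cochain complexes from $(C^{*+1}_{\mathfrak s}(\mathfrak g),\delta_{\mathfrak s})$ to $(\mathcal C^*(\mathfrak g^*,\mathfrak g),\delta_{\mathrm{RB}})$ and induces isomorphisms of the corresponding cohomology groups.
   Context: A pre-Lie algebra is a finite-dimensional vector space $\mathfrak g$ over a field of characteristic $0$ with product $\cdot$ satisfying $(x\cdot y)\cdot z-x\cdot(y\cdot z)=(y\cdot x)\cdot z-y\cdot(x\cdot z)$; $[x,y]_{\mathfrak g}=x\cdot y-y\cdot x$. Define $\langle L^*_x\alpha,y\rangle=-\langle\alpha,x\cdot y\rangle$, $\langle R^*_x\alpha,y\rangle=-\langle\alpha,y\cdot x\rangle$, $\mathrm{ad}^*_x=L^*_x-R^*_x$. For $r\in\mathrm{Sym}^2(\mathfrak g)$, $\langle r^\sharp(\alpha),\beta\rangle=r(\alpha,\beta)$; for $r=\sum_ia_i\otimes b_i$, $[r,r]=-\sum a_i\cdot a_j\otimes b_i\otimes b_j+\sum a_i\otimes b_i\cdot a_j\otimes b_j+\sum a_i\otimes a_j\otimes[b_i,b_j]_{\mathfrak g}$, and $r$ is an $\mathfrak s$-matrix if $[r,r]=0$.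 Set $\alpha\cdot_r\beta=\mathrm{ad}^*_{r^\sharp(\alpha)}\beta-R^*_{r^\sharp(\beta)}\alpha$, $[\alpha,\beta]_r=L^*_{r^\sharp(\alpha)}\beta-L^*_{r^\sharp(\beta)}\alpha$. $C^k_{\mathfrak s}(\mathfrak g)=\wedge^{k-1}\mathfrak g\otimes\mathfrak g$, with $\varphi$ regarded as the $k$-linear map $\varphi(\alpha_1,\dots,\alpha_k)=\langle\varphi,\alpha_1\wedge\dots\wedge\alpha_{k-1}\otimes\alpha_k\rangle$; $\delta_{\mathfrak s}:C^k_{\mathfrak s}\to C^{k+1}_{\mathfrak s}$ is $\delta_{\mathfrak s}\varphi(\alpha_1,\dots,\alpha_{k+1})=-\sum_{i=1}^k(-1)^{i+1}\varphi(\alpha_1,\dots,\widehat{\alpha_i},\dots,\alpha_k,\alpha_i\cdot_r\alpha_{k+1})+\sum_{1\le i<j\le k}(-1)^{i+j}\varphi([\alpha_i,\alpha_j]_r,\alpha_1,\dots,\widehat{\alpha_i},\dots,\widehat{\alpha_j},\dots,\alpha_{k+1})$. $\Psi:\wedge^k\mathfrak g\otimes\mathfrak g\to\mathcal C^k(\mathfrak g^*,\mathfrak g)=\mathrm{Hom}(\wedge^k\mathfrak g^*,\mathfrak g)$ is $\langle\Psi(\varphi)(\alpha_1,\dots,\alpha_k),\alpha_{k+1}\rangle=\langle\varphi,\alpha_1\wedge\dots\wedge\alpha_k\otimes\alpha_{k+1}\rangle$. For $P\in\mathcal C^k(\mathfrak g^*,\mathfrak g)$, $\delta_{\mathrm{RB}}P(\alpha_1,\dots,\alpha_{k+1})=\sum_{i=1}^{k+1}(-1)^{i+1}[r^\sharp(\alpha_i),P(\alpha_1,\dots,\widehat{\alpha_i},\dots,\alpha_{k+1})]_{\mathfrak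 g}+\sum_{i=1}^{k+1}(-1)^{i+1}r^\sharp\big(L^*_{P(\alpha_1,\dots,\widehat{\alpha_i},\dots,\alpha_{k+1})}\alpha_i\big)+\sum_{1\le i<j\le k+1}(-1)^{i+j}P([\alpha_i,\alpha_j]_r,\alpha_1,\dots,\widehat{\alpha_i},\dots,\widehat{\alpha_j},\dots,\alpha_{k+1})$. *)

From HB Require Import structures.
From mathcomp Require Import all_boot all_order all_algebra.
Set Implicit Arguments. Unset Strict Implicit. Unset Printing Implicit Defensive.
Import Order.TTheory GRing.Theory Num.Theory.
Local Open Scope ring_scope.

(* Conventions:
   - g = K^n represented by row vectors 'rV[K]_n; g^* is also 'rV[K]_n, with
     the canonical pairing <alpha, x> = sum_i alpha_i x_i (dual bases).
   - indices are 0-based, so the paper's (-1)^(i+1) (1-based) is (-1)^i here.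
   - an element phi of  wedge^k g (x) g = C^{k+1}_s  is represented, as in
     the paper, by the (k+1)-linear map on g^*; we curry it as
     phi : ('I_k -> g^* ) -> g^* -> K  (first k arguments alternating).
   - an element P of C^k(g^*, g) = Hom(wedge^k g^*, g) is a map
     P : ('I_k -> g^* ) -> g, multilinear and alternating. *)

Section PreLie.
Variables (K : fieldType) (n : nat).
Local Notation V := 'rV[K]_n.
Variable mul : V -> V -> V.
Variable rs : seq (V * V).    (* r = sum_{p in rs} p.1 (x) p.2 *)

Definition pairing (a x : V) : K := \sum_(i < n) a 0 i * x 0 i.

Definition ebase (j : 'I_n) : V := delta_mx 0 j.

Definition is_preLie : Prop :=
  [/\ (forall a x y z, mul (a *: x + y) z = a *: mul x z + mul y z),
      (forall a x y z, mul z (a *: x + y) = a *: mul z x + mul z y) &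
      (forall x y z, mul (mul x y) z - mul x (mul y z)
                     = mul (mul y x) z - mul y (mul x z))].

Definition brk (x y : V) : V := mul x y - mul y x.

(* <L^*_x alpha, y> = - <alpha, x . y>,  <R^*_x alpha, y> = - <alpha, y . x> *)
Definition Lstar (x a : V) : V := \row_j (- pairing a (mul x (ebase j))).
Definition Rstar (x a : V) : V := \row_j (- pairing a (mul (ebase j) x)).
Definition adstar (x a : V) : V := Lstar x a - Rstar x a.

(* r viewed as a bilinear form on g^* *)
Definition rform (a b : V) : K := \sum_(p <- rs) pairing a p.1 * pairing b p.2.
Definition r_symmetric : Prop := forall a b, rform a b = rform b a.
(* <r^#(alpha), beta> = r(alpha, beta) *)
Definition rsharp (a : V) : V := \row_j rform a (ebase j).

(* [r,r] viewed as a trilinear form on g^* *)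
Definition rr (a b c : V) : K :=
  - (\sum_(p <- rs) \sum_(q <- rs)
        pairing a (mul p.1 q.1) * pairing b p.2 * pairing c q.2)
  + (\sum_(p <- rs) \sum_(q <- rs)
        pairing a p.1 * pairing b (mul p.2 q.1) * pairing c q.2)
  + (\sum_(p <- rs) \sum_(q <- rs)
        pairing a p.1 * pairing b q.1 * pairing c (brk p.2 q.2)).
Definition is_s_matrix : Prop := r_symmetric /\ forall a b c, rr a b c = 0.

Definition dotr (a b : V) : V := adstar (rsharp a) b - Rstar (rsharp b) a.
Definition bracketr (a b : V) : V := Lstar (rsharp a) b - Lstar (rsharp b) a.

Definition drop1 (k : nat) (al : 'I_k.+1 -> V) (i : 'I_k.+1) : 'I_k -> V :=
  fun p => al (lift i p).
(* for i < j: the list (x, alpha_0, .., hat alpha_i, .., hat alpha_j, .., alpha_k) *)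
Definition ins_drop2 (k : nat) (al : 'I_k.+1 -> V) (i j : 'I_k.+1) (x : V)
  : 'I_k -> V :=
  fun p => if val p == 0%N then x
           else al (inord (bump j (bump i (val p).-1))).
Definition setarg (k : nat) (al : 'I_k -> V) (i : 'I_k) (v : V) : 'I_k -> V :=
  fun p => if p == i then v else al p.

Definition multilinear (k : nat) (X : lmodType K) (f : ('I_k -> V) -> X) : Prop :=
  forall al i a x y,
    f (setarg al i (a *: x + y)) = a *: f (setarg al i x) + f (setarg al i y).
Definition alternating (k : nat) (X : Type) (x0 : X) (f : ('I_k -> V) -> X) : Prop :=
  forall al i j, i != j -> al i = al j -> f al = x0.

Definition is_Cs (k : nat) (phi : ('I_k -> V) -> V -> K) : Prop :=
  [/\ (forall b, multilinear (fun al => (phi al b : K^o))),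
      (forall b, alternating 0 (fun al => phi al b)) &
      (forall al a x y, phi al (a *: x + y) = a * phi al x + phi al y)].

Definition is_CRB (k : nat) (P : ('I_k -> V) -> V) : Prop :=
  multilinear P /\ alternating 0 P.

Definition delta_s (k : nat) (phi : ('I_k -> V) -> V -> K)
  : ('I_k.+1 -> V) -> V -> K :=
  fun al b =>
    - (\sum_(i < k.+1) (-1) ^+ i * phi (drop1 al i) (dotr (al i) b))
    + \sum_(i < k.+1) \sum_(j < k.+1 | (i < j)%N)
        (-1) ^+ (i + j) * phi (ins_drop2 al i j (bracketr (al i) (al j))) b.

(* Psi : wedge^k g (x) g -> C^k(g^*, g),  <Psi phi (al), b> = phi(al, b) *)
Definition Psi (k : nat) (phi : ('I_k -> V) -> V -> K) : ('I_k -> V) -> V :=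
  fun al => \row_j phi al (ebase j).

Definition delta_RB (k : nat) (P : ('I_k -> V) -> V) : ('I_k.+1 -> V) -> V :=
  fun al =>
    \sum_(i < k.+1) (-1) ^+ i *: brk (rsharp (al i)) (P (drop1 al i))
    + \sum_(i < k.+1) (-1) ^+ i *: rsharp (Lstar (P (drop1 al i)) (al i))
    + \sum_(i < k.+1) \sum_(j < k.+1 | (i < j)%N)
        (-1) ^+ (i + j) *: P (ins_drop2 al i j (bracketr (al i) (al j))).

End PreLie.

From HB Require Import structures.
From mathcomp Require Import all_boot all_order all_algebra.
From mathcomp Require Import ring.
Import Order.TTheory GRing.Theory Num.Theory.
Local Open Scope ring_scope.

(* Under the pairing of g^* with g, Psi only re-reads the last argument of phi
   as a vector, and the two differentials have literally the same double sum
   (built from [_,_]_r).  The claim thus reduces to one identity on the single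
   sums: -<alpha .r beta, x> = <beta, [r#alpha, x]> + <beta, r#(L^*_x alpha)>,
   which follows from the adjunction formulas for L^*, R^*, r# and the symmetry
   of r. *)

Section Pairing.
Context {K : fieldType} {n : nat}.
Local Notation V := 'rV[K]_n.

Lemma pairingC (a x : V) : pairing a x = pairing x a.
Proof. by apply: eq_bigr => i _; rewrite mulrC. Qed.

Lemma pairingDl (a : K) (x y z : V) :
  pairing (a *: x + y) z = a * pairing x z + pairing y z.
Proof.
rewrite /pairing mulr_sumr -big_split /=; apply: eq_bigr => i _; rewrite !mxE; ring.
Qed.

Lemma pairingDr (a : K) (x y z : V) :
  pairing z (a *: x + y) = a * pairing z x + pairing z y.
Proof. by rewrite pairingC pairingDl !(pairingC z). Qed.

Lemma pairingBl (x y z : V) : pairing (x - y) z = pairing x z - pairing y z.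
Proof. by rewrite addrC -scaleN1r pairingDl mulN1r addrC. Qed.

Lemma pairingBr (x y z : V) : pairing z (x - y) = pairing z x - pairing z y.
Proof. by rewrite pairingC pairingBl !(pairingC z). Qed.

Lemma pairing0r (z : V) : pairing z 0 = 0.
Proof. by rewrite /pairing big1 // => i _; rewrite mxE mulr0. Qed.

Lemma pairing_ebase (j : 'I_n) (y : V) : pairing (ebase K j) y = y 0 j.
Proof.
rewrite /pairing (bigD1 j) //= big1 ?addr0 => [|i /negbTE ij].
  by rewrite mxE !eqxx mul1r.
by rewrite mxE ij andbF mul0r.
Qed.

Lemma linear_functional_ebaseE (f : V -> K) :
  (forall a x y, f (a *: x + y) = a * f x + f y) ->
  forall b, f b = \sum_j b 0 j * f (ebase K j).
Proof.
move=> f_lin b.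
have f0 : f 0 = 0.
  have := f_lin 1 0 0; rewrite scaler0 addr0 mul1r => f0_double.
  by apply: (addrI (f 0)); rewrite addr0 -f0_double.
rewrite {1}(row_sum_delta b); elim/big_rec2: _ => [|i y1 y2 _ <-]; first exact: f0.
exact: f_lin.
Qed.

(* The identification of g with (g^* )^* underlying Psi, r#, L^* and R^*. *)
Lemma pairing_row_ebase (f : V -> K) :
  (forall a x y, f (a *: x + y) = a * f x + f y) ->
  forall b, pairing b (\row_j f (ebase K j)) = f b.
Proof.
move=> f_lin b; rewrite (linear_functional_ebaseE _ f_lin b).
by apply: eq_bigr => j _; rewrite mxE.
Qed.

Lemma pairing_Psi (k : nat) (phi : ('I_k -> V) -> V -> K) :
  is_Cs phi -> forall al b, pairing b (Psi phi al) = phi al b.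
Proof. by case=> _ _ phi_lin al; apply: pairing_row_ebase. Qed.

End Pairing.

Section Adjoints.
Context {K : fieldType} {n : nat}.
Local Notation V := 'rV[K]_n.
Variable mul : V -> V -> V.
Variable rs : seq (V * V).
Hypothesis mulDl : forall a x y z, mul (a *: x + y) z = a *: mul x z + mul y z.
Hypothesis mulDr : forall a x y z, mul z (a *: x + y) = a *: mul z x + mul z y.

Lemma pairing_Lstar (y c x : V) :
  pairing (Lstar mul y c) x = - pairing c (mul y x).
Proof.
rewrite pairingC (pairing_row_ebase (fun u => - pairing c (mul y u))) // => a u v.
by rewrite mulDr pairingDr; ring.
Qed.

Lemma pairing_Rstar (y c x : V) :
  pairing (Rstar mul y c) x = - pairing c (mul x y).
Proof.
rewrite pairingC (pairing_row_ebase (fun u => - pairing c (mul u y))) // => a u v.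
by rewrite mulDl pairingDr; ring.
Qed.

Lemma pairing_rsharp (c d : V) : pairing c (rsharp rs d) = rform rs d c.
Proof.
rewrite pairing_row_ebase // => a x y.
rewrite /rform mulr_sumr -big_split /=; apply: eq_bigr => p _; rewrite pairingDl; ring.
Qed.

Hypothesis rsym : r_symmetric rs.

Lemma pairing_dotr (a c x : V) :
  - pairing (dotr mul rs a c) x =
  pairing c (brk mul (rsharp rs a) x) + pairing c (rsharp rs (Lstar mul x a)).
Proof.
rewrite /dotr /adstar !pairingBl !pairing_Lstar !pairing_Rstar.
rewrite /brk pairingBr pairing_rsharp rsym -pairing_rsharp pairing_Lstar.
ring.
Qed.

Lemma Psi_delta_s (k : nat) (phi : ('I_k -> V) -> V -> K) al :
  is_Cs phi -> Psi (delta_s mul rs phi) al = delta_RB mul rs (Psi phi) al.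
Proof.
move=> phi_Cs; apply/rowP => j; rewrite !mxE /delta_s !summxE.
congr (_ + _); last first.
  by apply: eq_bigr => i _; rewrite summxE; apply: eq_bigr => l _; rewrite !mxE.
rewrite -sumrN -big_split; apply: eq_bigr => i _.
rewrite -(pairing_Psi _ _ phi_Cs) -mulrN pairing_dotr !pairing_ebase.
by rewrite !mxE mulrDr.
Qed.

End Adjoints.

Section PsiIsomorphism.
Context {K : fieldType} {n k : nat}.
Local Notation V := 'rV[K]_n.

Definition Psi_inv (P : ('I_k -> V) -> V) : ('I_k -> V) -> V -> K :=
  fun al b => pairing b (P al).

Lemma Psi_is_CRB (phi : ('I_k -> V) -> V -> K) : is_Cs phi -> is_CRB (Psi phi).
Proof.
case=> phi_multi phi_alt _; split=> [al i a x y | al i j ij eq_ij].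
  by apply/rowP => l; rewrite !mxE phi_multi.
by apply/rowP => l; rewrite !mxE (phi_alt _ al i j).
Qed.

Lemma PsiD (a : K) (phi1 phi2 : ('I_k -> V) -> V -> K) al :
  Psi (fun bl b => a * phi1 bl b + phi2 bl b) al = a *: Psi phi1 al + Psi phi2 al.
Proof. by apply/rowP => j; rewrite !mxE. Qed.

Lemma Psi_inj (phi1 phi2 : ('I_k -> V) -> V -> K) :
  is_Cs phi1 -> is_Cs phi2 -> (forall al, Psi phi1 al = Psi phi2 al) ->
  forall al b, phi1 al b = phi2 al b.
Proof. by move=> Cs1 Cs2 eq12 al b; rewrite -!pairing_Psi // eq12. Qed.

Lemma Psi_inv_is_Cs (P : ('I_k -> V) -> V) : is_CRB P -> is_Cs (Psi_inv P).
Proof.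
case=> P_multi P_alt; split=> [b al i a x y | b al i j ij eq_ij | al a x y].
- by rewrite /Psi_inv P_multi pairingDr.
- by rewrite /Psi_inv (P_alt al i j) // pairing0r.
- exact: pairingDl.
Qed.

Lemma Psi_invK (P : ('I_k -> V) -> V) al : Psi (Psi_inv P) al = P al.
Proof. by apply/rowP => j; rewrite mxE /Psi_inv pairing_ebase. Qed.

End PsiIsomorphism.

Theorem proposition4p4 (K : fieldType) (n : nat)
  (mul : 'rV[K]_n -> 'rV[K]_n -> 'rV[K]_n) (rs : seq ('rV[K]_n * 'rV[K]_n))
  (k : nat) :
  [pchar K] =i pred0 ->
  is_preLie mul ->
  is_s_matrix mul rs ->
  (* chain map: Psi (delta_s phi) = delta_RB (Psi phi) *)
  (forall phi : ('I_k -> 'rV[K]_n) -> 'rV[K]_n -> K, is_Cs phi ->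
     forall al : 'I_k.+1 -> 'rV[K]_n,
       Psi (delta_s mul rs phi) al = delta_RB mul rs (Psi phi) al)
  (* Psi is a linear isomorphism C^{k+1}_s -> C^k(g^*, g) *)
  /\ (forall phi : ('I_k -> 'rV[K]_n) -> 'rV[K]_n -> K, is_Cs phi -> is_CRB (Psi phi))
  /\ (forall (a : K) (phi1 phi2 : ('I_k -> 'rV[K]_n) -> 'rV[K]_n -> K) al,
        Psi (fun bl b => a * phi1 bl b + phi2 bl b) al = a *: Psi phi1 al + Psi phi2 al)
  /\ (forall phi1 phi2 : ('I_k -> 'rV[K]_n) -> 'rV[K]_n -> K,
        is_Cs phi1 -> is_Cs phi2 -> (forall al, Psi phi1 al = Psi phi2 al) ->
        forall al b, phi1 al b = phi2 al b)
  /\ (forall P : ('I_k -> 'rV[K]_n) -> 'rV[K]_n, is_CRB P ->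
        exists phi, is_Cs phi /\ forall al, Psi phi al = P al).
Proof.
move=> _ [mulDl mulDr _] [rsym _].
split; first by move=> phi phi_Cs al; apply: Psi_delta_s.
split; first exact: Psi_is_CRB.
split; first by move=> a phi1 phi2 al; apply: PsiD.
split; first exact: Psi_inj.
move=> P P_CRB; exists (Psi_inv P).
by split; [apply: Psi_inv_is_Cs | apply: Psi_invK].
Qed.
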